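(* $\mathfrak{mac}(\mathsf{null}\setminus\{\emptyset\},\subseteq)=\mathfrak{c}$.
   Context: $\mathsf{null}$ is the ideal of Lebesgue measure zero subsets of $2^\omega$, ordered by inclusion. For a poset $P$, an antichain is a set of pairwise incomparable elements and $\mathfrak{mac}(P)$ is the minimal cardinality of a maximal (under inclusion) antichain. $\mathfrak{c}=2^{\aleph_0}$. *)

From HB Require Import structures.
From mathcomp Require Import all_boot all_order all_algebra.
From mathcomp Require Import boolp classical_sets cardinality.
Set Implicit Arguments. Unset Strict Implicit. Unset Printing Implicit Defensive.
Import Order.TTheory GRing.Theory Num.Theory.
Local Open Scope classical_set_scope.
Local Open Scope ring_scope.

Definition cantor := nat -> bool.

(* Basic clopen cylinder [s] determined by a finite binary string s;
   its Lebesgue (coin-flipping) measure is 2^-(size s). *)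
Definition cyl (s : seq bool) : set cantor :=
  [set x | forall i : nat, (i < size s)%N -> x i = nth false s i].

Definition null_set (A : set cantor) : Prop :=
  forall k : nat, exists s : nat -> seq bool,
    A `<=` \bigcup_n cyl (s n) /\
    forall N : nat, \sum_(n < N) ((2%:R : rat) ^- size (s n)) <= (2%:R : rat) ^- k.

Definition null_nonempty : set (set cantor) :=
  [set A | null_set A /\ A <> set0].

Definition antichain (X : set (set cantor)) : Prop :=
  X `<=` null_nonempty /\
  forall a b, X a -> X b -> a <> b -> ~ (a `<=` b) /\ ~ (b `<=` a).

Definition maximal_antichain (X : set (set cantor)) : Prop :=
  antichain X /\ forall Y, antichain Y -> X `<=` Y -> Y = X.

From mathcomp Require Import all_boot all_order all_algebra.
From mathcomp Require Import boolp classical_sets cardinality lra.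

Import Order.TTheory GRing.Theory Num.Theory.
Local Open Scope classical_set_scope.
Local Open Scope ring_scope.

(* The singletons form a maximal antichain of size c.  Conversely, let X be a
   maximal antichain.  The fibers F_x = {x interleaved with y | y} are
   pairwise disjoint nonempty null sets, so each is comparable with some D_x in X.
   If always D_x <= F_x, the D_x are pairwise distinct.  Otherwise some A in X
   contains a fiber, hence has c points a_t, and, A being null, its complement
   also contains c points g_t.  Every swap S_t = (A \ {a_t}) u {g_t} is null, so it
   is comparable with some D_t in X; as D_t is incomparable with A, either
   g_t in D_t <= S_t or S_t <= D_t and a_t notin D_t, and this determines t.

   The points g_t are the branches of a binary tree of cylinders, each of which
   is covered by a fixed small cover of A in relative measure < 1: averaging over
   the two halves of a cylinder shows that such a cylinder always has an
   extension both of whose halves are again of this kind. *)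

Lemma exp2N_gt0 n : 0 < (2 : rat) ^- n.
Proof. by rewrite invr_gt0 exprn_gt0. Qed.

Lemma exp2NS n : (2 : rat) ^- n.+1 = 2 ^- n / 2.
Proof. by rewrite exprS invfM mulrC. Qed.

Lemma exp2NS_double n : (2 : rat) ^- n.+1 + 2 ^- n.+1 = 2 ^- n.
Proof. rewrite exp2NS; lra. Qed.

Lemma sumr_ord_mono (F : nat -> rat) : (forall n, 0 <= F n) ->
  {homo (fun N => \sum_(n < N) F n) : N M / (N <= M)%N >-> N <= M}.
Proof.
move=> F_ge0; apply: homo_leq => [x|y x z|N]; [exact: lexx|exact: le_trans|].
by rewrite big_ord_recr lerDl.
Qed.

Lemma sum_exp2N_shift k N :
  \sum_(n < N) (2 : rat) ^- (k + n).+1 = 2 ^- k - 2 ^- (k + N).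
Proof.
elim: N => [|N IH]; first by rewrite big_ord0 addn0 subrr.
rewrite big_ord_recr /= IH addnS -(exp2NS_double (k + N)); lra.
Qed.

Lemma cyl_mkseq (x : cantor) n : cyl (mkseq x n) x.
Proof. by move=> i; rewrite size_mkseq => lt_i; rewrite nth_mkseq. Qed.

Lemma nth_prefix (s t : seq bool) i : prefix s t -> (i < size s)%N ->
  nth false t i = nth false s i.
Proof. by move=> /prefixP [u ->] lt_i; rewrite nth_cat lt_i. Qed.

Lemma cyl_prefix (s t : seq bool) (z : cantor) :
  cyl s z -> cyl t z -> (size s <= size t)%N -> prefix s t.
Proof.
move=> zs zt le_st; rewrite prefixE; apply/eqP/(@eq_from_nth _ false).
  by rewrite size_takel.
move=> i; rewrite size_takel // => lt_i.
by rewrite nth_take // -zt -?zs // (leq_trans lt_i).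
Qed.

Lemma sub_null_set (A B : set cantor) : A `<=` B -> null_set B -> null_set A.
Proof.
by move=> AB nB k; have [s [Bs s_small]] := nB k; exists s; split=> // z /AB /Bs.
Qed.

Definition cover_cat (L : seq (seq bool)) (s : nat -> seq bool) (n : nat) :=
  nth (s (n - size L)%N) L n.

Lemma cover_cat_small (L : seq (seq bool)) (s : nat -> seq bool) (b : rat) :
  (forall N, \sum_(n < N) 2 ^- size (s n) <= b) ->
  forall N, \sum_(n < N) 2 ^- size (cover_cat L s n) <= \sum_(t <- L) 2 ^- size t + b.
Proof.
move=> s_small; elim: L => [|t L IH] N.
  rewrite big_nil add0r (eq_bigr (fun n : 'I_N => 2 ^- size (s n))) ?s_small //.
  by move=> n _; rewrite /cover_cat nth_nil subn0.
rewrite big_cons -addrA; case: N => [|N].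
  rewrite big_ord0 addr_ge0 ?(ltW (exp2N_gt0 _)) //.
  by have := IH 0%N; rewrite big_ord0.
by rewrite big_ord_recl lerD2l; exact: IH.
Qed.

Lemma cover_cat_covers (L : seq (seq bool)) (s : nat -> seq bool) (z : cantor) :
  (exists2 t, t \in L & cyl t z) \/ (\bigcup_n cyl (s n)) z ->
  (\bigcup_n cyl (cover_cat L s n)) z.
Proof.
case=> [[t tL zt]|[n _ zsn]].
  by exists (index t L) => //; rewrite /cover_cat nth_index.
by exists (size L + n)%N => //; rewrite /cover_cat nth_default ?leq_addr // addKn.
Qed.

Lemma null_set_of_finite_covers (A : set cantor) :
  (forall k, exists L : seq (seq bool),
     (forall z, A z -> exists2 t, t \in L & cyl t z) /\
     \sum_(t <- L) (2 : rat) ^- size t <= 2 ^- k) ->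
  null_set A.
Proof.
move=> fin_cover k; have [L [AL L_small]] := fin_cover k.+1.
pose tail n := nseq (k.+1 + n).+1 false.
have tail_small N : \sum_(n < N) (2 : rat) ^- size (tail n) <= 2 ^- k.+1.
  by under eq_bigr do rewrite size_nseq; rewrite sum_exp2N_shift gerBl ltW ?exp2N_gt0.
exists (cover_cat L tail); split.
  by move=> z /AL zL; apply: cover_cat_covers; left.
move=> N; rewrite -exp2NS_double.
by apply: le_trans (cover_cat_small _ _ _ tail_small N) _; rewrite lerD2r.
Qed.

Lemma null_set1 (y : cantor) : null_set [set y].
Proof.
apply: null_set_of_finite_covers => k; exists [:: mkseq y k]; split.
  by move=> z ->; exists (mkseq y k); [rewrite mem_seq1 | exact: cyl_mkseq].
by rewrite big_seq1 size_mkseq.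
Qed.

Lemma null_setU1 (A : set cantor) (y : cantor) :
  null_set A -> null_set (A `|` [set y]).
Proof.
move=> nA k; have [s [As s_small]] := nA k.+1.
exists (cover_cat [:: mkseq y k.+1] s); split.
  move=> z [/As zs|->]; apply: cover_cat_covers; first by right.
  by left; exists (mkseq y k.+1); [rewrite mem_seq1 | exact: cyl_mkseq].
move=> N; rewrite -exp2NS_double; apply: le_trans (cover_cat_small _ _ _ s_small N) _.
by rewrite big_seq1 size_mkseq.
Qed.

(* [rel_mass t s] is the measure of [cyl s] inside [cyl t], relative to the
   measure of [cyl t]. *)
Fixpoint rel_mass (t s : seq bool) : rat :=
  match t, s with
  | [::], _ => 2 ^- size s
  | _ :: _, [::] => 1
  | b :: t', c :: s' => if b == c then rel_mass t' s' else 0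
  end.

Lemma rel_mass_ge0 t s : 0 <= rel_mass t s.
Proof.
by elim: t s => [|b t IH] [|c s] //=; [exact/ltW/exp2N_gt0.. | case: eqP].
Qed.

Lemma rel_mass_prefix t s : prefix s t -> rel_mass t s = 1.
Proof.
by elim: t s => [|b t IH] [|c s] //= /andP [/eqP -> /IH]; rewrite eqxx.
Qed.

Lemma rel_mass_rcons t s :
  rel_mass (rcons t false) s + rel_mass (rcons t true) s = 2 * rel_mass t s.
Proof.
elim: t s => [|b t IH] [|c s] /=.
- by rewrite expr0 invr1; lra.
- by rewrite exp2NS; case: c => /=; lra.
- lra.
- by case: eqP => _; [exact: IH | lra].
Qed.

Section CoverMass.
Variable c : nat -> seq bool.

Definition cover_mass N t := \sum_(n < N) rel_mass t (c n).

Definition cover_mass_le (b : rat) t := forall N, cover_mass N t <= b.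

Definition thin t := exists2 b, b < 1 & cover_mass_le b t.

Lemma cover_mass_mono t : {homo cover_mass^~ t : N M / (N <= M)%N >-> N <= M}.
Proof.
move=> N M; apply: (@sumr_ord_mono (fun n => rel_mass t (c n))) => n.
exact: rel_mass_ge0.
Qed.

Lemma cover_mass_rcons N t :
  cover_mass N (rcons t false) + cover_mass N (rcons t true) = 2 * cover_mass N t.
Proof.
rewrite /cover_mass -big_split mulr_sumr.
by apply: eq_bigr => n _; exact: rel_mass_rcons.
Qed.

Lemma cover_mass_le_sibling b g t (bit : bool) : cover_mass_le b t ->
  ~ cover_mass_le g (rcons t (~~ bit)) -> cover_mass_le (2 * b - g) (rcons t bit).
Proof.
move=> tb /existsNP [N0 /negP]; rewrite -ltNge => sibling_big N.
have := cover_mass_rcons (maxn N N0) t; have := tb (maxn N N0).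
have := cover_mass_mono (rcons t bit) _ _ (leq_maxl N N0).
have := cover_mass_mono (rcons t (~~ bit)) _ _ (leq_maxr N N0).
by case: bit sibling_big => /=; lra.
Qed.

Lemma thin_split t :
  thin t -> exists2 t', prefix t t' & thin (rcons t' false) /\ thin (rcons t' true).
Proof.
move=> [b b_lt1 tb]; apply: contrapT => no_split.
pose d := (1 - b) / 2; pose g := b + d.
have d_gt0 : 0 < d by rewrite /d; lra.
have g_lt1 : g < 1 by rewrite /g /d; lra.
(* Without a split, some child of every extension of [t] carries relative cover
   mass above [g]; the other child then loses [d], so the bound keeps dropping. *)
have descent j : exists2 t', prefix t t' & cover_mass_le (b - j%:R * d) t'.
  elim: j => [|j [t' tt' t'b]]; first by exists t; rewrite ?prefix_refl ?mul0r ?subr0.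
  have [bit heavy] : exists bit, ~ cover_mass_le g (rcons t' (~~ bit)).
    apply: contrapT => /forallNP light; apply: no_split; exists t' => //.
    by split; exists g => //; apply: contrapT; [exact: light true | exact: light false].
  exists (rcons t' bit); first exact: prefix_trans tt' (prefix_rcons _ _).
  move=> N; apply: le_trans (cover_mass_le_sibling _ _ _ _ t'b heavy N) _.
  have jd_ge0 : 0 <= j%:R * d by rewrite mulr_ge0 ?ler0n ?ltW.
  by rewrite -addn1 natrD mulrDl mul1r /g; lra.
have [j b_lt_jd] : exists j, b < j%:R * d.
  exists (Num.Def.archi_bound d^-1); rewrite -ltr_pdivrMr //.
  apply: (@lt_trans _ _ d^-1); last by apply: archi_boundP; rewrite invr_ge0 ltW.
  by rewrite -[X in _ < X]mul1r ltr_pM2r ?invr_gt0.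
have [t' _ t'b] := descent j.
by have := t'b 0%N; rewrite /cover_mass big_ord0; lra.
Qed.

End CoverMass.

Section PrefixChain.
Variable f : nat -> seq bool.
Hypothesis f_prefix : forall j, prefix (f j) (f j.+1).
Hypothesis f_size : forall j, (j <= size (f j))%N.

Definition chain_limit : cantor := fun i => nth false (f i.+1) i.

Lemma cyl_chain_limit j : cyl (f j) chain_limit.
Proof.
have f_mono := homo_leq (@prefix_refl _) (@prefix_trans _) f_prefix.
move=> i lt_i; rewrite /chain_limit; case: (leqP j i.+1) => [le_j|lt_j].
  exact: nth_prefix _ _ _ (f_mono _ _ le_j) lt_i.
by rewrite (nth_prefix _ _ _ (f_mono _ _ (ltnW lt_j))).
Qed.
End PrefixChain.

Section ThinTree.
Variables (c : nat -> seq bool) (stem : seq bool -> seq bool).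
Hypothesis stemP : forall t, thin c t ->
  [/\ prefix t (stem t), thin c (rcons (stem t) false) & thin c (rcons (stem t) true)].
Hypothesis thin_root : thin c [::].

Fixpoint node (x : cantor) j :=
  if j is j'.+1 then rcons (stem (node x j')) (x j') else [::].

Lemma thin_node x j : thin c (node x j).
Proof. by elim: j => //= j /stemP [_ ? ?]; case: (x j). Qed.

Lemma node_prefix x j : prefix (node x j) (node x j.+1).
Proof.
by have [? _ _] := stemP _ (thin_node x j); exact: prefix_trans (prefix_rcons _ _).
Qed.

Lemma node_size x j : (j <= size (node x j))%N.
Proof.
elim: j => //= j IH; rewrite size_rcons ltnS (leq_trans IH) //.
by have [/size_prefix ? _ _] := stemP _ (thin_node x j).
Qed.

Definition branch x := chain_limit (node x).

Lemma cyl_branch x j : cyl (node x j) (branch x).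
Proof. exact: cyl_chain_limit (node_prefix x) (node_size x) j. Qed.

Lemma branch_stem x j : branch x (size (stem (node x j))) = x j.
Proof. by rewrite (cyl_branch x j.+1) /= ?nth_rcons ?ltnn ?eqxx // size_rcons. Qed.

Lemma branch_inj : injective branch.
Proof.
move=> x y bxy; have node_eq j : node x j = node y j.
  by elim: j => //= j IH; rewrite -IH -branch_stem bxy IH branch_stem.
by apply/funext => j; rewrite -branch_stem bxy node_eq branch_stem.
Qed.

Lemma branch_uncovered x n : ~ cyl (c n) (branch x).
Proof.
move=> cn_branch; have [b b_lt1 bound] := thin_node x (size (c n)).
have cn_node : prefix (c n) (node x (size (c n))).
  exact: cyl_prefix cn_branch (cyl_branch x _) (node_size x _).
have := bound n.+1; rewrite /cover_mass big_ord_recr /= rel_mass_prefix //.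
have : 0 <= \sum_(i < n) rel_mass (node x (size (c n))) (c i).
  by apply: sumr_ge0 => i _; exact: rel_mass_ge0.
lra.
Qed.
End ThinTree.

Lemma null_compl_inj (A : set cantor) :
  null_set A -> exists2 f : cantor -> cantor, injective f & forall x, ~ A (f x).
Proof.
move=> /(_ 1%N) [c [A_cover c_small]].
have /choice [stem stemP] : forall t, exists t', thin c t ->
    [/\ prefix t t', thin c (rcons t' false) & thin c (rcons t' true)].
  move=> t.
  have [/thin_split [t' ? [? ?]]|] := pselect (thin c t); first by exists t'.
  by exists t.
have thin_root : thin c [::].
  by exists (2 ^- 1); [rewrite expr1 invf_lt1 ?ltr1n | exact: c_small].
exists (branch stem) => [|x /A_cover [n _]]; first exact: branch_inj stemP thin_root.
exact: branch_uncovered stemP thin_root x n.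
Qed.

Definition interleave (x y : cantor) : cantor :=
  fun n => if odd n then y n./2 else x n./2.

Lemma interleave_double x y n : interleave x y n.*2 = x n.
Proof. by rewrite /interleave odd_double doubleK. Qed.

Lemma interleave_doubleS x y n : interleave x y n.*2.+1 = y n.
Proof. by rewrite /interleave /= odd_double /= uphalf_double. Qed.

Lemma interleave_inj x : injective (interleave x).
Proof.
move=> y y' xy; apply/funext => n.
by rewrite -(interleave_doubleS x y) xy interleave_doubleS.
Qed.

Definition fiber (x : cantor) : set cantor := range (interleave x).

Lemma fiber_disjoint x x' z : fiber x z -> fiber x' z -> x = x'.
Proof.
move=> [y _ <-] [y' _ xy]; apply/funext => n.
by rewrite -(interleave_double x y n) -xy interleave_double.
Qed.

Lemma null_fiber x : null_set (fiber x).
Proof.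
apply: null_set_of_finite_covers => k.
pose cover (w : k.-tuple bool) := mkseq (interleave x (nth false w)) k.*2.
exists [seq cover w | w : k.-tuple bool]; split.
  move=> _ [y _ <-]; exists (cover [tuple of mkseq y k]); first exact: fintype.image_f.
  have -> : cover [tuple of mkseq y k] = mkseq (interleave x y) k.*2.
    apply: (@eq_from_nth _ false) => [|i]; rewrite !size_mkseq // => lt_i.
    rewrite !nth_mkseq // /interleave; case: odd => //=.
    by rewrite nth_mkseq // ltn_half_double.
  exact: cyl_mkseq.
rewrite big_image /=; under eq_bigr do rewrite size_mkseq.
rewrite sumr_const card_tuple card_bool -(mulr_natr (2 ^- k.*2)).
have -> : ((2 ^ k)%N%:R : rat) = 2 ^+ k by rewrite natrX.
by rewrite -addnn exprD invfM -mulrA mulVf ?mulr1 // expf_neq0.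
Qed.

Local Open Scope card_scope.

Lemma card_le_of_inj T (X : set T) (f : cantor -> T) :
  injective f -> (forall x, X (f x)) -> [set: cantor] #<= X.
Proof.
move=> f_inj fX; have /card_eqPle [_ le_image] : f @` [set: cantor] #= [set: cantor].
  by apply: inj_card_eq => x y _ _; exact: f_inj.
by apply: card_le_trans le_image (subset_card_le _) => _ [x _ <-].
Qed.

Lemma set1_inj T : injective (fun x : T => [set x]).
Proof. by move=> x y xy; have : [set x] x by []; rewrite xy. Qed.

Lemma null_nonempty1 (y : cantor) : null_nonempty [set y].
Proof. by split; [exact: null_set1 | apply/eqP/set0P; exists y]. Qed.

Lemma singletons_maximal_antichain :
  maximal_antichain (range (fun x : cantor => [set x])).
Proof.
split.
  split=> [_ [x _ <-]|_ _ [x _ <-] [y _ <-] xy]; first exact: null_nonempty1.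
  by split=> sub; apply: xy; [rewrite (sub x erefl) | rewrite -(sub y erefl)].
move=> Y [Y_null Y_anti] sub; apply/seteqP; split=> // B YB.
have [_ /eqP/set0P [x Bx]] := Y_null B YB.
have Yx : Y [set x] by apply: sub; exists x.
have [<-|xB] := pselect ([set x] = B); first by exists x.
by have [x_notin_B _] := Y_anti _ _ Yx YB xB; exfalso; apply: x_notin_B => y ->.
Qed.

Lemma maximal_antichain_comparable X B : maximal_antichain X -> null_nonempty B ->
  exists2 D, X D & D `<=` B \/ B `<=` D.
Proof.
move=> [[X_null X_anti] X_max] B_nonempty; apply: contrapT => incomparable.
have B_incomparable D : X D -> ~ D `<=` B /\ ~ B `<=` D.
  by move=> XD; split=> sub; apply: incomparable; exists D => //; by [left | right].
have XB_anti : antichain (X `|` [set B]).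
  split=> [D [/X_null|->] //|D D' [XD|->] [XD'|->] DD'].
  - exact: X_anti.
  - exact: B_incomparable.
  - by have [? ?] := B_incomparable _ XD'.
  - by [].
have XB_eq := X_max _ XB_anti (fun D XD => or_introl XD).
have XB : X B by rewrite -XB_eq; right.
by have [_] := B_incomparable B XB; apply.
Qed.

Definition swap (A : set cantor) (a g : cantor) : set cantor :=
  A `\` [set a] `|` [set g].

Definition swap_witness (D A : set cantor) (a g : cantor) :=
  (D g /\ D `<=` swap A a g) \/ (swap A a g `<=` D /\ ~ D a).

Lemma swap_witness_of_comparable D A a g :
  D `<=` swap A a g \/ swap A a g `<=` D -> ~ D `<=` A -> ~ A `<=` D ->
  swap_witness D A a g.
Proof.
case=> sub DA AD; [left | right]; split=> //.
  apply: contrapT => Dg; apply: DA => w Dw.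
  by case: (sub w Dw) => [[]//|gw]; rewrite gw in Dw.
move=> Da; apply: AD => w Aw.
by have [->//|wa] := pselect (w = a); apply: sub; left.
Qed.

Section Swaps.
Variables (A : set cantor) (a g : cantor -> cantor).
Hypotheses (a_inj : injective a) (g_inj : injective g).
Hypotheses (a_in : forall t, A (a t)) (g_out : forall t, ~ A (g t)).

Lemma swap_g_eq t t' : swap A (a t) (g t) (g t') -> t' = t.
Proof. by case=> [[/g_out]|/g_inj]. Qed.

Lemma swap_witness_inj D t t' : swap_witness D A (a t) (g t) ->
  swap_witness D A (a t') (g t') -> t = t'.
Proof.
move=> [[Dgt Dt]|[Dt Dat]] [[Dgt' Dt']|[Dt' Dat']].
- exact/swap_g_eq/Dt'.
- by apply/esym/swap_g_eq/Dt/Dt'; right.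
- by apply/swap_g_eq/Dt'/Dt; right.
- apply: contrapT => tt'; apply: Dat; apply: Dt'; left; split=> //.
  by move/a_inj.
Qed.

Lemma swap_incomparable t :
  ~ A `<=` swap A (a t) (g t) /\ ~ swap A (a t) (g t) `<=` A.
Proof.
split=> [/(_ _ (a_in t))|/(_ (g t))].
  by case=> [[_ /(_ erefl)]//|at_gt]; apply: (g_out t); rewrite -at_gt.
by move=> A_gt; apply: (g_out t); apply: A_gt; right.
Qed.

Lemma card_ge_of_swaps X : maximal_antichain X -> X A -> [set: cantor] #<= X.
Proof.
move=> X_max XA; have [[X_null X_anti] _] := X_max.
have [A_null _] := X_null A XA.
have swap_nonempty t : null_nonempty (swap A (a t) (g t)).
  split; last by apply/eqP/set0P; exists (g t); right.
  by apply: sub_null_set (null_setU1 _ (g t) A_null) => w [[]|]; [left | right].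
have /choice [D DP] t : exists D,
    X D /\ (D `<=` swap A (a t) (g t) \/ swap A (a t) (g t) `<=` D).
  have [D ? ?] := maximal_antichain_comparable _ _ X_max (swap_nonempty t).
  by exists D.
have witness t : swap_witness (D t) A (a t) (g t).
  have [XD cmp] := DP t; have DA : D t <> A.
    by move=> DA; have [] := swap_incomparable t; rewrite DA in cmp; case: cmp.
  by have [? ?] := X_anti _ _ XD XA DA; exact: swap_witness_of_comparable.
apply: (@card_le_of_inj _ _ D) => [t t' Dtt'|t]; last by have [] := DP t.
by apply: (swap_witness_inj _ _ _ (witness t)); rewrite Dtt'; exact: witness.
Qed.
End Swaps.

Lemma card_ge_of_large_member X A (a : cantor -> cantor) : maximal_antichain X ->
  X A -> injective a -> (forall t, A (a t)) -> [set: cantor] #<= X.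
Proof.
move=> X_max XA a_inj a_in; have [A_null _] := X_max.1.1 A XA.
have [g g_inj g_out] := null_compl_inj _ A_null.
exact: (card_ge_of_swaps _ _ _ a_inj g_inj a_in g_out _ X_max XA).
Qed.

Lemma card_ge_of_fiber_subsets X (D : cantor -> set cantor) : X `<=` null_nonempty ->
  (forall x, X (D x)) -> (forall x, D x `<=` fiber x) -> [set: cantor] #<= X.
Proof.
move=> X_null XD D_fiber; apply: (@card_le_of_inj _ _ D _ XD) => x x' Dxx'.
have [_ /eqP/set0P [w Dxw]] := X_null _ (XD x).
apply: (fiber_disjoint _ _ _ (D_fiber x _ Dxw)).
by rewrite Dxx' in Dxw; exact: D_fiber.
Qed.

Lemma maximal_antichain_card_ge X : maximal_antichain X -> [set: cantor] #<= X.
Proof.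
move=> X_max; have fiber_nonempty x : null_nonempty (fiber x).
  by split; [exact: null_fiber | apply/eqP/set0P; exists (interleave x x), x].
have /choice [D DP] x : exists D, X D /\ (D `<=` fiber x \/ fiber x `<=` D).
  have [D ? ?] := maximal_antichain_comparable _ _ X_max (fiber_nonempty x).
  by exists D.
have [D_fiber|/existsNP [x0 not_sub]] := pselect (forall x, D x `<=` fiber x).
  apply: (card_ge_of_fiber_subsets _ _ X_max.1.1 _ D_fiber) => x.
  by have [] := DP x.
have [XD0 [//|fiber_sub]] := DP x0.
apply: (card_ge_of_large_member _ _ _ X_max XD0 (interleave_inj x0)) => t.
by apply: fiber_sub; exists t.
Qed.

Theorem mainTheorem12 :
  (exists X : set (set cantor), maximal_antichain X /\ X #= [set: cantor]) /\
  (forall X : set (set cantor), maximal_antichain X -> [set: cantor] #<= X).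
Proof.
split; last exact: maximal_antichain_card_ge.
exists (range (fun x : cantor => [set x])); split.
  exact: singletons_maximal_antichain.
exact: inj_card_eq (in2W (@set1_inj _)).
Qed.
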